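(* Let $M,N$ be $L$-structures with $M\equiv N$ (affine elementary equivalence), and assume both are $\aleph_0$-saturated in the affine sense. Then $M$ and $N$ are elementarily equivalent in full continuous logic, i.e. they assign the same value to every CL-sentence.
   Context: Affine continuous logic over a Lipschitz language $L$: structures are complete metric spaces of diameter $\le1$ with Lipschitz interpretations; affine formulas are built from atomic $1,d(t_1,t_2),R(\bar t)$ by $+$, real scalars, $\sup$, $\inf$; CL-formulas additionally allow the connectives $\wedge$ (min) and $\vee$ (max). $M\equiv N$ means $\sigma^M=\sigma^N$ for all affine sentences. For $A\subseteq M$, a type over $A$ is a positive linear functional $p$ with $p(1)=1$ on the space of affine formulas $\phi(\bar x)$ with parameters from $A$, identified when they take the same values on $M$; $\bar b$ realizes $p$ if $p(\phi)=\phi^M(\bar b)$ for all such $\phi$. $M$ is $\aleph_0$-saturated if for every finite $A\subseteq M$ every 1-type over $A$ is realized in $M$. *)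

From Stdlib Require Import Reals.
From Stdlib Require Fin.
From Coquelicot Require Import Coquelicot.
Open Scope R_scope.

Record language := {
  func : Type;
  farity : func -> nat;
  flip : func -> R;
  flip_nonneg : forall f, 0 <= flip f;
  rel : Type;
  rarity : rel -> nat;
  rlip : rel -> R;
  rlip_nonneg : forall r, 0 <= rlip r
}.

Record structure (L : language) := {
  carrier :> Type;
  dist : carrier -> carrier -> R;
  carrier_inhabited : inhabited carrier;
  dist_refl : forall x, dist x x = 0;
  dist_sep : forall x y, dist x y = 0 -> x = y;
  dist_sym : forall x y, dist x y = dist y x;
  dist_tri : forall x y z, dist x z <= dist x y + dist y z;
  dist_diam : forall x y, dist x y <= 1;
  dist_complete : forall u : nat -> carrier,
    (forall eps, 0 < eps -> exists N, forall m n, (N <= m)%nat -> (N <= n)%nat ->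
        dist (u m) (u n) < eps) ->
    exists x, forall eps, 0 < eps -> exists N, forall n, (N <= n)%nat -> dist (u n) x < eps;
  ifun : forall f : func L, (Fin.t (farity L f) -> carrier) -> carrier;
  ifun_lip : forall f x y delta,
    (forall i, dist (x i) (y i) <= delta) -> dist (ifun f x) (ifun f y) <= flip L f * delta;
  irel : forall r : rel L, (Fin.t (rarity L r) -> carrier) -> R;
  irel_lip : forall r x y delta,
    (forall i, dist (x i) (y i) <= delta) -> Rabs (irel r x - irel r y) <= rlip L r * delta
}.
Arguments dist {L} _ _ _.
Arguments ifun {L} _ _ _.
Arguments irel {L} _ _ _.

(** * Syntax. Variables are de Bruijn indices (nat); [C] is a type of
    parameter (constant) names. *)
Inductive term (L : language) (C : Type) : Type :=
| TVar : nat -> term L C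
| TCst : C -> term L C
| TApp : forall f : func L, (Fin.t (farity L f) -> term L C) -> term L C.
Arguments TVar {L C} _.
Arguments TCst {L C} _.
Arguments TApp {L C} _ _.

(** CL-formulas; affine formulas are those without [FMin]/[FMax].
    [FSup phi] / [FInf phi] bind de Bruijn variable 0 of [phi]. *)
Inductive formula (L : language) (C : Type) : Type :=
| FOne : formula L C
| FDist : term L C -> term L C -> formula L C
| FRel : forall r : rel L, (Fin.t (rarity L r) -> term L C) -> formula L C
| FAdd : formula L C -> formula L C -> formula L C
| FScale : R -> formula L C -> formula L C
| FSup : formula L C -> formula L C
| FInf : formula L C -> formula L C
| FMin : formula L C -> formula L C -> formula L C
| FMax : formula L C -> formula L C -> formula L C.
Arguments FOne {L C}.
Arguments FDist {L C} _ _.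
Arguments FRel {L C} _ _.
Arguments FAdd {L C} _ _.
Arguments FScale {L C} _ _.
Arguments FSup {L C} _.
Arguments FInf {L C} _.
Arguments FMin {L C} _ _.
Arguments FMax {L C} _ _.

Fixpoint affine {L C} (phi : formula L C) : Prop :=
  match phi with
  | FOne | FDist _ _ | FRel _ _ => True
  | FAdd p q => affine p /\ affine q
  | FScale _ p | FSup p | FInf p => affine p
  | FMin _ _ | FMax _ _ => False
  end.

Fixpoint tfv_below {L C} (n : nat) (t : term L C) : Prop :=
  match t with
  | TVar i => (i < n)%nat
  | TCst _ => True
  | TApp f args => forall i, tfv_below n (args i)
  end.

Fixpoint fv_below {L C} (n : nat) (phi : formula L C) : Prop :=
  match phi with
  | FOne => True
  | FDist s t => tfv_below n s /\ tfv_below n t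
  | FRel r args => forall i, tfv_below n (args i)
  | FAdd p q | FMin p q | FMax p q => fv_below n p /\ fv_below n q
  | FScale _ p => fv_below n p
  | FSup p | FInf p => fv_below (S n) p
  end.

Definition scons {M : Type} (a : M) (e : nat -> M) : nat -> M :=
  fun i => match i with O => a | S j => e j end.

Definition Rsup (S : R -> Prop) : R := real (Lub_Rbar S).
Definition Rinf (S : R -> Prop) : R := real (Glb_Rbar S).

Fixpoint teval {L C} (M : structure L) (k : C -> M) (e : nat -> M) (t : term L C) : M :=
  match t with
  | TVar i => e i
  | TCst c => k c
  | TApp f args => ifun M f (fun i => teval M k e (args i))
  end.

Fixpoint eval {L C} (M : structure L) (k : C -> M) (e : nat -> M) (phi : formula L C) : R :=
  match phi with
  | FOne => 1
  | FDist s t => dist M (teval M k e s) (teval M k e t)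
  | FRel r args => irel M r (fun i => teval M k e (args i))
  | FAdd p q => eval M k e p + eval M k e q
  | FScale c p => c * eval M k e p
  | FSup p => Rsup (fun v => exists b : M, v = eval M k (scons b e) p)
  | FInf p => Rinf (fun v => exists b : M, v = eval M k (scons b e) p)
  | FMin p q => Rmin (eval M k e p) (eval M k e q)
  | FMax p q => Rmax (eval M k e p) (eval M k e q)
  end.

Definition no_params (M : Type) : Empty_set -> M := fun c => match c with end.

Definition sentence {L} (s : formula L Empty_set) : Prop := fv_below 0 s.

(** Affine elementary equivalence M ≡ N (the value of a sentence does not
    depend on the environment, which is quantified over). *)
Definition affine_equiv {L} (M N : structure L) : Prop :=
  forall s : formula L Empty_set, affine s -> sentence s ->
    forall (eM : nat -> M) (eN : nat -> N),
      eval M (no_params M) eM s = eval N (no_params N) eN s.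

Definition CL_equiv {L} (M N : structure L) : Prop :=
  forall s : formula L Empty_set, sentence s ->
    forall (eM : nat -> M) (eN : nat -> N),
      eval M (no_params M) eM s = eval N (no_params N) eN s.

(** A finite parameter set A ⊆ M is given as a tuple [a : Fin.t n -> M];
    formulas with parameters from A are formulas over constants [Fin.t n].
    An affine formula φ(x) in one variable x has free variables below 1
    (x is de Bruijn variable 0); its value at b is [eval M a (fun _ => b) φ]. *)
Definition one_var_affine {L n} (phi : formula L (Fin.t n)) : Prop :=
  affine phi /\ fv_below 1 phi.

Definition fval {L n} (M : structure L) (a : Fin.t n -> M) (phi : formula L (Fin.t n)) (b : M) : R :=
  eval M a (fun _ => b) phi.

(** A 1-type over A: a positive linear functional with p(1)=1 on the space of
    affine formulas φ(x) with parameters from A modulo equality of values on M;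
    represented as a function on formulas that respects that identification. *)
Definition is_1type {L n} (M : structure L) (a : Fin.t n -> M)
    (p : formula L (Fin.t n) -> R) : Prop :=
  (forall phi psi, one_var_affine phi -> one_var_affine psi ->
     (forall b, fval M a phi b = fval M a psi b) -> p phi = p psi) /\
  (forall phi psi, one_var_affine phi -> one_var_affine psi ->
     p (FAdd phi psi) = p phi + p psi) /\
  (forall c phi, one_var_affine phi -> p (FScale c phi) = c * p phi) /\
  (forall phi, one_var_affine phi -> (forall b, 0 <= fval M a phi b) -> 0 <= p phi) /\
  p FOne = 1.

Definition realizes {L n} (M : structure L) (a : Fin.t n -> M)
    (p : formula L (Fin.t n) -> R) (b : M) : Prop :=
  forall phi, one_var_affine phi -> p phi = fval M a phi b.

Definition aleph0_saturated {L} (M : structure L) : Prop :=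
  forall (n : nat) (a : Fin.t n -> M) (p : formula L (Fin.t n) -> R),
    is_1type M a p -> exists b : M, realizes M a p b.

(** Call environments [eX] of [M] and [eY] of [N] affinely equivalent up to [n] when
    every affine formula with free variables below [n] takes the same value at both.
    Given such a pair and [c] in [M], the map sending an affine formula [ψ(x)] with
    parameters [eY 0, …, eY (n-1)] to the value of the corresponding formula at
    [(eX, c)] is a type over those parameters in [N]: well-definedness and positivity
    transfer from [N] to [M] because [sup_x ψ] is again an affine formula. Saturation
    of [N] realizes it by some [d], and the extended environments are again
    equivalent. Running this back and forth, an induction on CL-formulas shows that
    equivalent environments give every CL-formula the same value: [min]/[max] are
    pointwise, and [sup]/[inf] range over the same set of values. *)

From Stdlib Require Import Reals Arith Lra Lia FunctionalExtensionality.
From Stdlib Require Fin.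
From Coquelicot Require Import Coquelicot.
Open Scope R_scope.

Definition fin_nat {n} (i : Fin.t n) : nat := proj1_sig (Fin.to_nat i).

Lemma fin_nat_lt {n} (i : Fin.t n) : (fin_nat i < n)%nat.
Proof. exact (proj2_sig (Fin.to_nat i)). Qed.

Lemma fin_nat_of_nat_lt {p n} (h : (p < n)%nat) : fin_nat (Fin.of_nat_lt h) = p.
Proof. unfold fin_nat. now rewrite Fin.to_nat_of_nat. Qed.

Lemma dist_nonneg {L} (X : structure L) x y : 0 <= dist X x y.
Proof.
  pose proof (dist_tri L X x y x) as Htri.
  rewrite dist_refl, (dist_sym L X y x) in Htri. lra.
Qed.

Lemma Rsup_ub (S : R -> Prop) (B v : R) :
  (forall w, S w -> w <= B) -> S v -> v <= Rsup S.
Proof.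
  intros HB Hv. unfold Rsup. destruct (Lub_Rbar_correct S) as [Hub Hlub].
  assert (Hfin : Rbar_le (Lub_Rbar S) B) by (apply Hlub; exact HB).
  specialize (Hub v Hv).
  destruct (Lub_Rbar S); simpl in *; tauto.
Qed.

Lemma Rsup_le (S : R -> Prop) (B : R) :
  (exists v, S v) -> (forall v, S v -> v <= B) -> Rsup S <= B.
Proof.
  intros [v Hv] HB. unfold Rsup. destruct (Lub_Rbar_correct S) as [Hub Hlub].
  assert (Hfin : Rbar_le (Lub_Rbar S) B) by (apply Hlub; exact HB).
  specialize (Hub v Hv).
  destruct (Lub_Rbar S); simpl in *; tauto.
Qed.

Lemma Rsup_abs_le (S : R -> Prop) (B : R) :
  (exists v, S v) -> (forall v, S v -> Rabs v <= B) -> Rabs (Rsup S) <= B.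
Proof.
  intros [v Hv] HB.
  assert (Hle : Rsup S <= B).
  { apply Rsup_le; [now exists v|]. intros w Hw. specialize (HB w Hw).
    apply Rabs_le_between in HB. lra. }
  assert (Hge : v <= Rsup S).
  { apply (Rsup_ub S B); [|exact Hv]. intros w Hw. specialize (HB w Hw).
    apply Rabs_le_between in HB. lra. }
  specialize (HB v Hv). apply Rabs_le_between in HB. apply Rabs_le. lra.
Qed.

Lemma Rinf_abs_le (S : R -> Prop) (B : R) :
  (exists v, S v) -> (forall v, S v -> Rabs v <= B) -> Rabs (Rinf S) <= B.
Proof.
  intros [v Hv] HB. unfold Rinf. destruct (Glb_Rbar_correct S) as [Hlb Hglb].
  assert (Hfin : Rbar_le (- B) (Glb_Rbar S)).
  { apply Hglb. intros w Hw. specialize (HB w Hw). apply Rabs_le_between in HB.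
    simpl. lra. }
  specialize (Hlb v Hv). pose proof (HB v Hv) as Hv'. apply Rabs_le_between in Hv'.
  destruct (Glb_Rbar S); simpl in *; try tauto.
  apply Rabs_le. lra.
Qed.

Lemma Rsup_eqset (S T : R -> Prop) : (forall v, S v <-> T v) -> Rsup S = Rsup T.
Proof. intros H. unfold Rsup. f_equal. now apply Lub_Rbar_eqset. Qed.

Lemma Rinf_eqset (S T : R -> Prop) : (forall v, S v <-> T v) -> Rinf S = Rinf T.
Proof. intros H. unfold Rinf. f_equal. now apply Glb_Rbar_eqset. Qed.

Lemma image_ext {T} (F G : T -> R) :
  (forall b, F b = G b) -> (fun v => exists b, v = F b) = (fun v => exists b, v = G b).
Proof. intros H. apply functional_extensionality in H. now subst. Qed.

Lemma eval_bounded {L C} (X : structure L) (k : C -> X) (phi : formula L C) :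
  exists B, forall e, Rabs (eval X k e phi) <= B.
Proof.
  destruct (carrier_inhabited L X) as [x0].
  induction phi as [| s t | r args | p [B1 H1] q [B2 H2] | c p [B1 H1]
                   | p [B1 H1] | p [B1 H1] | p [B1 H1] q [B2 H2] | p [B1 H1] q [B2 H2]];
    simpl.
  - exists 1. intros _. rewrite Rabs_R1. lra.
  - exists 1. intros e. rewrite Rabs_pos_eq by apply dist_nonneg. apply dist_diam.
  - exists (Rabs (irel X r (fun _ => x0)) + rlip L r). intros e.
    pose proof (irel_lip L X r (fun i => teval X k e (args i)) (fun _ => x0) 1
                  (fun i => dist_diam L X _ _)).
    pose proof (Rabs_triang_inv (irel X r (fun i => teval X k e (args i)))
                  (irel X r (fun _ => x0))).
    lra.
  - exists (B1 + B2). intros e. eapply Rle_trans; [apply Rabs_triang|].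
    specialize (H1 e). specialize (H2 e). lra.
  - exists (Rabs c * B1). intros e. rewrite Rabs_mult.
    apply Rmult_le_compat_l; [apply Rabs_pos | apply H1].
  - exists B1. intros e. apply Rsup_abs_le; [now exists (eval X k (scons x0 e) p), x0|].
    intros v [b ->]. apply H1.
  - exists B1. intros e. apply Rinf_abs_le; [now exists (eval X k (scons x0 e) p), x0|].
    intros v [b ->]. apply H1.
  - exists (B1 + B2). intros e. specialize (H1 e). specialize (H2 e).
    pose proof (Rabs_pos (eval X k e p)). pose proof (Rabs_pos (eval X k e q)).
    unfold Rmin. destruct Rle_dec; lra.
  - exists (B1 + B2). intros e. specialize (H1 e). specialize (H2 e).
    pose proof (Rabs_pos (eval X k e p)). pose proof (Rabs_pos (eval X k e q)).
    unfold Rmax. destruct Rle_dec; lra.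
Qed.

Lemma scons_agree {X : Type} m (e e' : nat -> X) b :
  (forall j, (j < m)%nat -> e j = e' j) ->
  forall j, (j < S m)%nat -> scons b e j = scons b e' j.
Proof. intros H [|j] Hj; simpl; auto with arith. Qed.

Lemma teval_agree {L C} (X : structure L) (k : C -> X) m (t : term L C) e e' :
  tfv_below m t -> (forall j, (j < m)%nat -> e j = e' j) ->
  teval X k e t = teval X k e' t.
Proof.
  induction t as [j|c|f args IH]; simpl; intros Hfv Hag; auto.
  f_equal. apply functional_extensionality. auto.
Qed.

Lemma eval_agree {L C} (X : structure L) (k : C -> X) (phi : formula L C) :
  forall m e e', fv_below m phi -> (forall j, (j < m)%nat -> e j = e' j) ->
  eval X k e phi = eval X k e' phi.
Proof.
  induction phi; intros m e e' Hfv Hag; simpl in *;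
    repeat match goal with H : _ /\ _ |- _ => destruct H end;
    f_equal; eauto using teval_agree.
  - apply functional_extensionality. eauto using teval_agree.
  - apply image_ext. intro b. eapply IHphi; [eassumption|]. apply scons_agree, Hag.
  - apply image_ext. intro b. eapply IHphi; [eassumption|]. apply scons_agree, Hag.
Qed.

Lemma fval_scons {L n} (X : structure L) (a : Fin.t n -> X) (psi : formula L (Fin.t n)) b e :
  fv_below 1 psi -> fval X a psi b = eval X a (scons b e) psi.
Proof.
  intros Hfv. apply (eval_agree X a psi 1); [exact Hfv|].
  intros [|j] Hj; [reflexivity | lia].
Qed.

Definition env_params {X : Type} (n : nat) (e : nat -> X) : Fin.t n -> X :=
  fun i => e (fin_nat i).

Fixpoint tparams_to_vars {L n} (m : nat) (t : term L (Fin.t n)) : term L Empty_set :=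
  match t with
  | TVar j => TVar j
  | TCst i => TVar (m + fin_nat i)
  | TApp f args => TApp f (fun i => tparams_to_vars m (args i))
  end.

Fixpoint params_to_vars {L n} (m : nat) (phi : formula L (Fin.t n)) : formula L Empty_set :=
  match phi with
  | FOne => FOne
  | FDist s t => FDist (tparams_to_vars m s) (tparams_to_vars m t)
  | FRel r args => FRel r (fun i => tparams_to_vars m (args i))
  | FAdd p q => FAdd (params_to_vars m p) (params_to_vars m q)
  | FScale c p => FScale c (params_to_vars m p)
  | FSup p => FSup (params_to_vars (S m) p)
  | FInf p => FInf (params_to_vars (S m) p)
  | FMin p q => FMin (params_to_vars m p) (params_to_vars m q)
  | FMax p q => FMax (params_to_vars m p) (params_to_vars m q)
  end.

Lemma params_to_vars_affine {L n} (phi : formula L (Fin.t n)) m :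
  affine phi -> affine (params_to_vars m phi).
Proof. revert m; induction phi; simpl; intuition. Qed.

Lemma tparams_to_vars_fv {L n} (t : term L (Fin.t n)) m :
  tfv_below m t -> tfv_below (m + n) (tparams_to_vars m t).
Proof.
  induction t as [j|i|f args IH]; simpl; auto.
  - lia.
  - pose proof (fin_nat_lt i). lia.
Qed.

Lemma params_to_vars_fv {L n} (phi : formula L (Fin.t n)) m :
  fv_below m phi -> fv_below (m + n) (params_to_vars m phi).
Proof.
  revert m; induction phi; intros m; simpl; try apply (IHphi (S m));
    intuition auto using tparams_to_vars_fv.
Qed.

Lemma eval_tparams_to_vars {L n} (X : structure L) (a : Fin.t n -> X) (t : term L (Fin.t n))
    m e e0 :
  tfv_below m t -> (forall j, (j < m)%nat -> e j = e0 j) ->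
  (forall i, e (m + fin_nat i)%nat = a i) ->
  teval X (no_params X) e (tparams_to_vars m t) = teval X a e0 t.
Proof.
  induction t as [j|i|f args IH]; simpl; intros Hfv Hag Ha; auto.
  f_equal. apply functional_extensionality. auto.
Qed.

Lemma eval_params_to_vars {L n} (X : structure L) (a : Fin.t n -> X) (phi : formula L (Fin.t n)) :
  forall m e e0, fv_below m phi -> (forall j, (j < m)%nat -> e j = e0 j) ->
  (forall i, e (m + fin_nat i)%nat = a i) ->
  eval X (no_params X) e (params_to_vars m phi) = eval X a e0 phi.
Proof.
  induction phi; intros m e e0 Hfv Hag Ha; simpl in *;
    repeat match goal with H : _ /\ _ |- _ => destruct H end;
    f_equal; eauto using eval_tparams_to_vars.
  - apply functional_extensionality. eauto using eval_tparams_to_vars.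
  - apply image_ext. intro b. apply (IHphi (S m)); auto. apply scons_agree, Hag.
  - apply image_ext. intro b. apply (IHphi (S m)); auto. apply scons_agree, Hag.
Qed.

Fixpoint tvars_to_params {L} (n m : nat) (t : term L Empty_set) : term L (Fin.t n) :=
  match t with
  | TVar j =>
      match lt_dec j m with
      | left _ => TVar j
      | right _ =>
          match lt_dec (j - m) n with
          | left h => TCst (Fin.of_nat_lt h)
          | right _ => TVar j
          end
      end
  | TCst c => match c with end
  | TApp f args => TApp f (fun i => tvars_to_params n m (args i))
  end.

Fixpoint vars_to_params {L} (n m : nat) (phi : formula L Empty_set) : formula L (Fin.t n) :=
  match phi with
  | FOne => FOne
  | FDist s t => FDist (tvars_to_params n m s) (tvars_to_params n m t)
  | FRel r args => FRel r (fun i => tvars_to_params n m (args i))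
  | FAdd p q => FAdd (vars_to_params n m p) (vars_to_params n m q)
  | FScale c p => FScale c (vars_to_params n m p)
  | FSup p => FSup (vars_to_params n (S m) p)
  | FInf p => FInf (vars_to_params n (S m) p)
  | FMin p q => FMin (vars_to_params n m p) (vars_to_params n m q)
  | FMax p q => FMax (vars_to_params n m p) (vars_to_params n m q)
  end.

Lemma vars_to_params_affine {L} n (phi : formula L Empty_set) m :
  affine phi -> affine (vars_to_params n m phi).
Proof. revert m; induction phi; simpl; intuition. Qed.

Lemma tvars_to_params_fv {L} n (t : term L Empty_set) m :
  tfv_below (m + n) t -> tfv_below m (tvars_to_params n m t).
Proof.
  induction t as [j|[]|f args IH]; simpl; auto.
  intros Hj. destruct (lt_dec j m); [exact l|].
  destruct (lt_dec (j - m) n); simpl; [exact I | lia].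
Qed.

Lemma vars_to_params_fv {L} n (phi : formula L Empty_set) m :
  fv_below (m + n) phi -> fv_below m (vars_to_params n m phi).
Proof.
  revert m; induction phi; intros m; simpl; try apply (IHphi (S m));
    intuition auto using tvars_to_params_fv.
Qed.

Lemma eval_tvars_to_params {L n} (X : structure L) (a : Fin.t n -> X) (t : term L Empty_set)
    m e e0 :
  tfv_below (m + n) t -> (forall j, (j < m)%nat -> e j = e0 j) ->
  (forall i, e (m + fin_nat i)%nat = a i) ->
  teval X a e0 (tvars_to_params n m t) = teval X (no_params X) e t.
Proof.
  induction t as [j|[]|f args IH]; simpl; intros Hfv Hag Ha.
  - destruct (lt_dec j m) as [Hjm|Hjm]; simpl; [symmetry; auto|].
    destruct (lt_dec (j - m) n) as [h|h]; [|lia]. simpl.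
    rewrite <- Ha, fin_nat_of_nat_lt. f_equal. lia.
  - f_equal. apply functional_extensionality. auto.
Qed.

Lemma eval_vars_to_params {L n} (X : structure L) (a : Fin.t n -> X) (phi : formula L Empty_set) :
  forall m e e0, fv_below (m + n) phi -> (forall j, (j < m)%nat -> e j = e0 j) ->
  (forall i, e (m + fin_nat i)%nat = a i) ->
  eval X a e0 (vars_to_params n m phi) = eval X (no_params X) e phi.
Proof.
  induction phi; intros m e e0 Hfv Hag Ha; simpl in *;
    repeat match goal with H : _ /\ _ |- _ => destruct H end;
    f_equal; eauto using eval_tvars_to_params.
  - apply functional_extensionality. eauto using eval_tvars_to_params.
  - apply image_ext. intro b. apply (IHphi (S m)); auto. apply scons_agree, Hag.
  - apply image_ext. intro b. apply (IHphi (S m)); auto. apply scons_agree, Hag.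
Qed.

Lemma eval_params_to_vars_closed {L n} (X : structure L) (e e0 : nat -> X)
    (phi : formula L (Fin.t n)) :
  fv_below 0 phi ->
  eval X (no_params X) e (params_to_vars 0 phi) = eval X (env_params n e) e0 phi.
Proof.
  intros Hfv. apply eval_params_to_vars; [exact Hfv | intros j Hj; lia | reflexivity].
Qed.

Lemma fval_vars_to_params {L n} (X : structure L) (e : nat -> X) (chi : formula L Empty_set) c :
  fv_below (S n) chi ->
  fval X (env_params n e) (vars_to_params n 1 chi) c = eval X (no_params X) (scons c e) chi.
Proof.
  intros Hfv. apply eval_vars_to_params; [exact Hfv | | reflexivity].
  intros [|j] Hj; [reflexivity | lia].
Qed.

Definition affine_equiv_env {L} (X Y : structure L) (n : nat) (eX : nat -> X) (eY : nat -> Y) :=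
  forall chi : formula L Empty_set, affine chi -> fv_below n chi ->
    eval X (no_params X) eX chi = eval Y (no_params Y) eY chi.

Lemma affine_equiv_env_sym {L} (X Y : structure L) n eX eY :
  affine_equiv_env X Y n eX eY -> affine_equiv_env Y X n eY eX.
Proof. intros H chi Achi Fchi. symmetry. auto. Qed.

(* [sup_x (psi - chi)] is affine, so its value is the same on both sides. *)
Lemma affine_equiv_env_transfer_le {L} (X Y : structure L) n eX eY
    (psi chi : formula L (Fin.t n)) (c : X) :
  affine_equiv_env X Y n eX eY -> one_var_affine psi -> one_var_affine chi ->
  (forall b, fval Y (env_params n eY) psi b <= fval Y (env_params n eY) chi b) ->
  fval X (env_params n eX) psi c <= fval X (env_params n eX) chi c.
Proof.
  intros Hequiv [Apsi Fpsi] [Achi Fchi] Hle.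
  set (delta := FAdd psi (FScale (-1) chi)).
  assert (Adelta : affine delta) by (simpl; tauto).
  assert (Fdelta : fv_below 1 delta) by (simpl; tauto).
  assert (Hsup : forall (Z : structure L) (e : nat -> Z),
    eval Z (no_params Z) e (params_to_vars 0 (FSup delta))
    = Rsup (fun v => exists b, v = fval Z (env_params n e) delta b)).
  { intros Z e. rewrite (eval_params_to_vars_closed Z e e) by exact Fdelta.
    apply (f_equal Rsup), image_ext. intro b. symmetry. now apply fval_scons. }
  pose proof (Hequiv (params_to_vars 0 (FSup delta))) as Hsame.
  rewrite !Hsup in Hsame.
  specialize (Hsame (params_to_vars_affine (FSup delta) 0 Adelta)
                    (params_to_vars_fv (FSup delta) 0 Fdelta)).
  assert (HY : Rsup (fun v => exists b, v = fval Y (env_params n eY) delta b) <= 0).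
  { destruct (carrier_inhabited L Y) as [y0].
    apply Rsup_le; [now exists (fval Y (env_params n eY) delta y0), y0|].
    intros v [b ->]. specialize (Hle b). unfold fval in *. simpl. lra. }
  destruct (eval_bounded X (env_params n eX) delta) as [B HB].
  assert (HX : fval X (env_params n eX) delta c
               <= Rsup (fun v => exists b, v = fval X (env_params n eX) delta b)).
  { apply (Rsup_ub _ B); [|now exists c].
    intros w [b ->]. specialize (HB (fun _ => b)). apply Rabs_le_between in HB.
    unfold fval. lra. }
  assert (Hdelta : fval X (env_params n eX) delta c
                   = fval X (env_params n eX) psi c - fval X (env_params n eX) chi c)
    by (unfold fval; simpl; ring).
  lra.
Qed.

Definition type_of {L n} (X : structure L) (a : Fin.t n -> X) (c : X) :
  formula L (Fin.t n) -> R :=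
  fun psi => fval X a psi c.

Lemma type_of_is_1type {L} (X Y : structure L) n eX eY (c : X) :
  affine_equiv_env X Y n eX eY ->
  is_1type Y (env_params n eY) (type_of X (env_params n eX) c).
Proof.
  intros Hequiv. unfold type_of.
  split; [|split; [|split; [|split]]].
  - intros phi psi Hphi Hpsi Heq.
    apply Rle_antisym; apply (affine_equiv_env_transfer_le X Y n eX eY); auto;
      intro b; rewrite Heq; apply Rle_refl.
  - reflexivity.
  - reflexivity.
  - intros phi Hphi Hpos.
    assert (Hzero : one_var_affine (FScale 0 phi)) by (destruct Hphi; split; assumption).
    pose proof (affine_equiv_env_transfer_le X Y n eX eY (FScale 0 phi) phi c
                  Hequiv Hzero Hphi) as Hle.
    unfold fval in *. simpl in Hle.
    rewrite Rmult_0_l in Hle. apply Hle. intro b. simpl. rewrite Rmult_0_l. apply Hpos.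
  - reflexivity.
Qed.

Lemma affine_equiv_env_forth {L} (X Y : structure L) n eX eY :
  aleph0_saturated Y -> affine_equiv_env X Y n eX eY ->
  forall c, exists d, affine_equiv_env X Y (S n) (scons c eX) (scons d eY).
Proof.
  intros satY Hequiv c.
  destruct (satY n _ _ (type_of_is_1type X Y n eX eY c Hequiv)) as [d Hd].
  exists d. intros chi Achi Fchi.
  assert (Hchi : one_var_affine (vars_to_params n 1 chi)).
  { split; [now apply vars_to_params_affine | now apply vars_to_params_fv]. }
  specialize (Hd _ Hchi). unfold type_of in Hd.
  now rewrite !fval_vars_to_params in Hd.
Qed.

Lemma affine_equiv_env_same_values {L} (X Y : structure L) n eX eY (phi : formula L Empty_set) :
  aleph0_saturated X -> aleph0_saturated Y ->
  (forall eX' eY', affine_equiv_env X Y (S n) eX' eY' ->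
     eval X (no_params X) eX' phi = eval Y (no_params Y) eY' phi) ->
  affine_equiv_env X Y n eX eY ->
  forall v, (exists c, v = eval X (no_params X) (scons c eX) phi)
        <-> (exists d, v = eval Y (no_params Y) (scons d eY) phi).
Proof.
  intros satX satY Hphi Hequiv v. split.
  - intros [c ->]. destruct (affine_equiv_env_forth X Y n eX eY satY Hequiv c) as [d Hd].
    exists d. now apply Hphi.
  - intros [d ->].
    destruct (affine_equiv_env_forth Y X n eY eX satX (affine_equiv_env_sym _ _ _ _ _ Hequiv) d)
      as [c Hc].
    exists c. symmetry. apply Hphi, affine_equiv_env_sym, Hc.
Qed.

Lemma affine_equiv_env_eval {L} (X Y : structure L) :
  aleph0_saturated X -> aleph0_saturated Y ->
  forall (phi : formula L Empty_set) n eX eY, fv_below n phi -> affine_equiv_env X Y n eX eY ->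
    eval X (no_params X) eX phi = eval Y (no_params Y) eY phi.
Proof.
  intros satX satY phi.
  induction phi; intros n eX eY Hfv Hequiv;
    try solve [apply Hequiv; simpl; auto]; simpl in *;
    repeat match goal with H : _ /\ _ |- _ => destruct H end.
  - f_equal; eauto.
  - f_equal; eauto.
  - apply Rsup_eqset, (affine_equiv_env_same_values X Y n); auto.
    intros eX' eY'. now apply IHphi.
  - apply Rinf_eqset, (affine_equiv_env_same_values X Y n); auto.
    intros eX' eY'. now apply IHphi.
  - f_equal; eauto.
  - f_equal; eauto.
Qed.

Theorem mainTheorem12 (L : language) (M N : structure L) :
  affine_equiv M N -> aleph0_saturated M -> aleph0_saturated N -> CL_equiv M N.
Proof.
  intros Haff satM satN s Hs eM eN.
  apply (affine_equiv_env_eval M N satM satN s 0); [exact Hs|].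
  intros chi Achi Fchi. now apply Haff.
Qed.
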